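(* Let $\mathcal{H}$ be a complex separable Hilbert space and let $T = MN - NM$ where $M, N \in \mathcal{B}(\mathcal{H})$ satisfy $M^2 = 0 = N^2$. Then for every $0 \ne \alpha \in \mathbb{C}$ and every integer $k \ge 1$, \[ \dim \ker (T - \alpha I)^k = \dim \ker (T + \alpha I)^k. \] *)

From HB Require Import structures.
From mathcomp Require Import all_boot all_order all_algebra.
From mathcomp Require Import reals.
From mathcomp.real_closed Require Import complex.
Set Implicit Arguments. Unset Strict Implicit. Unset Printing Implicit Defensive.
Import Order.TTheory GRing.Theory Num.Theory.
Local Open Scope ring_scope.

Section Hilbert.
Variable R : realType.
Local Notation C := (R[i]).
Variable V : lmodType C.

Definition is_inner_product (ip : V -> V -> C) : Prop :=
  [/\ (forall (a : C) (x y z : V), ip (a *: x + y) z = a * ip x z + ip y z),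
      (forall x y : V, ip y x = conjc (ip x y)),
      (forall x : V, 0 <= ip x x) &
      (forall x : V, ip x x = 0 -> x = 0)].

Definition ipnorm (ip : V -> V -> C) (x : V) : R := Num.sqrt (complex.Re (ip x x)).

Definition ip_complete (ip : V -> V -> C) : Prop :=
  forall u : nat -> V,
    (forall e : R, 0 < e -> exists N : nat, forall m n : nat,
        (N <= m)%N -> (N <= n)%N -> ipnorm ip (u m - u n) < e) ->
    exists l : V, forall e : R, 0 < e -> exists N : nat, forall n : nat,
        (N <= n)%N -> ipnorm ip (u n - l) < e.

Definition ip_separable (ip : V -> V -> C) : Prop :=
  exists d : nat -> V, forall (x : V) (e : R), 0 < e ->
    exists n : nat, ipnorm ip (x - d n) < e.

Definition separable_hilbert (ip : V -> V -> C) : Prop :=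
  [/\ is_inner_product ip, ip_complete ip & ip_separable ip].

Definition bounded_op (ip : V -> V -> C) (A : V -> V) : Prop :=
  linear A /\ exists c : R, forall x : V, ipnorm ip (A x) <= c * ipnorm ip x.

Definition has_dim (S : V -> Prop) (n : nat) : Prop :=
  exists b : 'I_n -> V,
    [/\ (forall i, S (b i)),
        (forall c : 'I_n -> C, \sum_(i < n) c i *: b i = 0 -> forall i, c i = 0) &
        (forall x, S x -> exists c : 'I_n -> C, x = \sum_(i < n) c i *: b i)].

(* Equality of dimensions in {0,1,2,...} u {infinite}: the two subspaces
   have the same finite dimension, or are both infinite-dimensional. *)
Definition same_dim (S1 S2 : V -> Prop) : Prop :=
  forall n : nat, has_dim S1 n <-> has_dim S2 n.

Definition kerop (A : V -> V) : V -> Prop := fun x => A x = 0.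

End Hilbert.

From HB Require Import structures.
From mathcomp Require Import all_boot all_order all_algebra.
From mathcomp Require Import reals.
From mathcomp.real_closed Require Import complex.
Import Order.TTheory GRing.Theory Num.Theory.
Local Open Scope ring_scope.

(* Put L := M + N.  From M^2 = N^2 = 0 one gets L T = - T L and T^2 = L^4.
   Anticommutation makes L map ker (T - a)^k into ker (T + a)^k and back.
   Since a != 0, T is invertible on ker (T - a)^k; hence L is injective there
   (L x = 0 forces T^2 x = L^4 x = 0), and onto ker (T + a)^k, because every y
   in it is T^2 z = L (L^3 z) with z in ker (T + a)^k.  So L is a linear
   bijection between the two kernels. *)

Section LinearFun.
Context {K : pzRingType} {U W : lmodType K} {f : U -> W}.
Hypothesis f_lin : linear f.

Let f_linear : {linear U -> W} :=
  HB.pack_for {linear U -> W} f (GRing.isLinear.Build _ _ _ _ f f_lin).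

Lemma lin0 : f 0 = 0. Proof. exact: (raddf0 f_linear). Qed.
Lemma linD x y : f (x + y) = f x + f y. Proof. exact: (raddfD f_linear). Qed.
Lemma linN x : f (- x) = - f x. Proof. exact: (raddfN f_linear). Qed.
Lemma linB x y : f (x - y) = f x - f y. Proof. exact: (raddfB f_linear). Qed.
Lemma linZ a x : f (a *: x) = a *: f x. Proof. exact: (linearZZ f_linear). Qed.

Lemma lin_sum n (c : 'I_n -> K) (b : 'I_n -> U) :
  f (\sum_(i < n) c i *: b i) = \sum_(i < n) c i *: f (b i).
Proof. by rewrite (big_morph f linD lin0); apply: eq_bigr => i _; apply: linZ. Qed.

End LinearFun.

Section LinearEndo.
Context {K : pzRingType} {V : lmodType K}.

Lemma linear_iter {f : V -> V} k : linear f -> linear (iter k f).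
Proof. by move=> f_lin; elim: k => [|k IHk] a u v //=; rewrite IHk f_lin. Qed.

Lemma commutator_linear {f g : V -> V} : linear f -> linear g ->
  linear (fun x => f (g x) - g (f x)).
Proof.
move=> f_lin g_lin a u v.
by rewrite (g_lin a) (f_lin a) (f_lin a) (g_lin a) scalerBr opprD addrACA.
Qed.

Lemma sum_linear {f g : V -> V} : linear f -> linear g -> linear (fun x => f x + g x).
Proof. by move=> f_lin g_lin a u v; rewrite f_lin g_lin scalerDr addrACA. Qed.

Section SquareZero.
Context {M N : V -> V}.
Hypotheses (M_lin : linear M) (N_lin : linear N).
Hypotheses (M2 : forall x, M (M x) = 0) (N2 : forall x, N (N x) = 0).

Let T x := M (N x) - N (M x).
Let L x := M x + N x.

Lemma sum_anticommutes_commutator x : L (T x) = - T (L x).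
Proof.
rewrite /T /L !(linB M_lin, linB N_lin, linD M_lin, linD N_lin, linN M_lin, linN N_lin).
by rewrite !(M2, N2) !(lin0 M_lin, lin0 N_lin, oppr0) !(add0r, addr0, subr0) opprB addrC.
Qed.

Lemma commutator_sqr x : T (T x) = L (L (L (L x))).
Proof.
rewrite /T /L !(linB M_lin, linB N_lin, linD M_lin, linD N_lin, linN M_lin, linN N_lin).
by rewrite !(M2, N2) !(lin0 M_lin, lin0 N_lin, oppr0) !(add0r, addr0, subr0, opprK).
Qed.

End SquareZero.
End LinearEndo.

Definition shift {K : pzRingType} {V : lmodType K} (T : V -> V) (b : K) :=
  fun x => T x - b *: x.

Section GeneralizedEigenspaces.
Context {K : fieldType} {V : lmodType K} {T : V -> V}.

Lemma iter_shift_commute (S : V -> V) b k x : linear S ->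
  (forall y, S (T y) = T (S y)) ->
  iter k (shift T b) (S x) = S (iter k (shift T b) x).
Proof.
move=> S_lin ST; elim: k => [|k IHk] //=.
by rewrite IHk /shift (linB S_lin) (linZ S_lin) ST.
Qed.

Hypothesis T_lin : linear T.

Lemma shift_linear b : linear (shift T b).
Proof.
by move=> a u v; rewrite /shift T_lin scalerDr scalerBr !scalerA mulrC opprD addrACA.
Qed.

Lemma iter_shift_anticommute (S : V -> V) b k x : linear S ->
  (forall y, S (T y) = - T (S y)) ->
  iter k (shift T (- b)) (S x) = (-1) ^+ k *: S (iter k (shift T b) x).
Proof.
move=> S_lin ST; elim: k => [|k IHk] /=; first by rewrite scale1r.
rewrite IHk (linZ (shift_linear _)) exprSr -scalerA; congr (_ *: _).
by rewrite /shift (linB S_lin) (linZ S_lin) ST !scaleNr scale1r opprD !opprK.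
Qed.

Context {b : K}.
Hypothesis b_neq0 : b != 0.

(* On ker T the operator T - b acts as the invertible scalar -b. *)
Lemma ker_iter_shift_T_inj k x : iter k (shift T b) x = 0 -> T x = 0 -> x = 0.
Proof.
move=> Ex0 Tx0.
have Ej j : iter j (shift T b) x = (- b) ^+ j *: x.
  elim: j => [|j IHj] /=; first by rewrite scale1r.
  by rewrite IHj (linZ (shift_linear _)) /shift Tx0 sub0r exprSr -scalerA scaleNr.
by move/eqP: Ex0; rewrite Ej scaler_eq0 expf_eq0 oppr_eq0 (negbTE b_neq0) andbF => /eqP.
Qed.

(* If (T - b) x = T w then x = T (b^-1 (x - w)). *)
Lemma ker_iter_shift_T_onto k x : iter k (shift T b) x = 0 ->
  exists2 y, iter k (shift T b) y = 0 & T y = x.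
Proof.
elim: k x => [|k IHk] x Ex0; first by move: Ex0 => /= ->; exists 0; rewrite ?(lin0 T_lin).
have /IHk [w Ew0 Tw] : iter k (shift T b) (shift T b x) = 0 by rewrite -iterSr.
have E_lin := linear_iter k.+1 (shift_linear b).
exists (b^-1 *: (x - w)).
  by rewrite (linZ E_lin) (linB E_lin) Ex0 iterS Ew0 (lin0 (shift_linear b)) subrr scaler0.
by rewrite (linZ T_lin) (linB T_lin) Tw /shift opprB addrC addrNK scalerA mulVf // scale1r.
Qed.

End GeneralizedEigenspaces.

Section Anticommuting.
Context {K : fieldType} {V : lmodType K} {T L : V -> V}.
Hypotheses (T_lin : linear T) (L_lin : linear L) (LT : forall x, L (T x) = - T (L x)).
Hypothesis TT : forall x, T (T x) = L (L (L (L x))).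

Lemma L_maps_ker_iter_shift c k x :
  iter k (shift T c) x = 0 -> iter k (shift T (- c)) (L x) = 0.
Proof.
move=> Ex0.
by rewrite (iter_shift_anticommute T_lin _ _ _ _ L_lin LT) Ex0 (lin0 L_lin) scaler0.
Qed.

Context {b : K}.
Hypothesis b_neq0 : b != 0.

Lemma L_inj_ker_iter_shift k x : iter k (shift T b) x = 0 -> L x = 0 -> x = 0.
Proof.
move=> Ex0 Lx0.
have ETx0 : iter k (shift T b) (T x) = 0.
  by rewrite (iter_shift_commute _ _ _ _ T_lin) // Ex0 (lin0 T_lin).
have TTx0 : T (T x) = 0 by rewrite TT Lx0 !(lin0 L_lin).
apply: (ker_iter_shift_T_inj T_lin b_neq0 _ _ Ex0).
exact: (ker_iter_shift_T_inj T_lin b_neq0 _ _ ETx0).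
Qed.

Lemma L_onto_ker_iter_shift k y : iter k (shift T (- b)) y = 0 ->
  exists2 x, iter k (shift T b) x = 0 & L x = y.
Proof.
have Nb_neq0 : - b != 0 by rewrite oppr_eq0.
have L_maps_opp c v : iter k (shift T (- c)) v = 0 -> iter k (shift T c) (L v) = 0.
  by rewrite -{2}[c]opprK; apply: L_maps_ker_iter_shift.
have T_onto := ker_iter_shift_T_onto T_lin Nb_neq0.
move=> /T_onto [z /T_onto [u Eu0 <-] <-].
exists (L (L (L u))); last by rewrite TT.
by apply: (L_maps_opp); apply: L_maps_ker_iter_shift; apply: (L_maps_opp).
Qed.

End Anticommuting.

Section Dimension.
Context {R : realType}.

Lemma has_dim_kerop_bij {U W : lmodType R[i]} (F : U -> U) (G : W -> W) (L : U -> W) n :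
  linear F -> linear L ->
  (forall x, F x = 0 -> G (L x) = 0) ->
  (forall x, F x = 0 -> L x = 0 -> x = 0) ->
  (forall y, G y = 0 -> exists2 x, F x = 0 & L x = y) ->
  has_dim (kerop F) n -> has_dim (kerop G) n.
Proof.
move=> F_lin L_lin L_maps L_inj L_onto [e [Fe0 e_free e_span]].
exists (fun i => L (e i)); split.
- by move=> i; apply/L_maps/Fe0.
- move=> c Lc0; apply: e_free; apply: L_inj; last by rewrite (lin_sum L_lin).
  by rewrite (lin_sum F_lin) big1 // => i _; rewrite Fe0 scaler0.
- move=> y /L_onto [x /e_span [c ->] <-].
  by exists c; rewrite (lin_sum L_lin).
Qed.

Lemma has_dim_ext (V : lmodType R[i]) (S S' : V -> Prop) n :
  (forall x, S x <-> S' x) -> has_dim S n -> has_dim S' n.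
Proof.
move=> SS' [e [Se e_free e_span]]; exists e; split=> // [i|x /SS' /e_span //].
exact/SS'.
Qed.

Lemma same_dim_kerop_ext (V : lmodType R[i]) (S : V -> Prop) (G G' : V -> V) :
  G =1 G' -> same_dim S (kerop G) -> same_dim S (kerop G').
Proof.
by move=> GG' SG n; rewrite SG; split; apply: has_dim_ext => x; rewrite /kerop GG'.
Qed.

Lemma same_dim_ker_iter_shift_opp {V : lmodType R[i]} {T L : V -> V} {b : R[i]} k :
  linear T -> linear L ->
  (forall x, L (T x) = - T (L x)) -> (forall x, T (T x) = L (L (L (L x)))) ->
  b != 0 ->
  same_dim (kerop (iter k (shift T b))) (kerop (iter k (shift T (- b)))).
Proof.
move=> T_lin L_lin LT TT.
have E_lin c := linear_iter k (shift_linear T_lin c).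
have L_transfer (c : R[i]) n : c != 0 ->
    has_dim (kerop (iter k (shift T c))) n ->
    has_dim (kerop (iter k (shift T (- c)))) n.
  move=> c_neq0; apply: (has_dim_kerop_bij _ _ _ _ (E_lin c) L_lin).
  - exact: L_maps_ker_iter_shift.
  - exact: L_inj_ker_iter_shift.
  - exact: L_onto_ker_iter_shift.
move=> b_neq0 n; split; first exact: L_transfer.
by rewrite -{2}[b]opprK; apply: L_transfer; rewrite oppr_eq0.
Qed.

End Dimension.

Theorem theorem2p08 (R : realType) (V : lmodType R[i]) (ip : V -> V -> R[i])
  (HV : separable_hilbert ip) (M N : V -> V)
  (HM : bounded_op ip M) (HN : bounded_op ip N)
  (HM2 : forall x, M (M x) = 0) (HN2 : forall x, N (N x) = 0)
  (alpha : R[i]) (Halpha : alpha != 0) (k : nat) (Hk : (1 <= k)%N) :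
  let T := fun x => M (N x) - N (M x) in
  same_dim (kerop (iter k (fun x => T x - alpha *: x)))
           (kerop (iter k (fun x => T x + alpha *: x))).
Proof.
move=> T; have [M_lin _] := HM; have [N_lin _] := HN.
have := same_dim_ker_iter_shift_opp k (commutator_linear M_lin N_lin)
  (sum_linear M_lin N_lin) (sum_anticommutes_commutator M_lin N_lin HM2 HN2)
  (commutator_sqr M_lin N_lin HM2 HN2) Halpha.
by apply: same_dim_kerop_ext; apply: eq_iter => x; rewrite /shift scaleNr opprK.
Qed.
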